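(* Let $G$ be a finite group with identity $e$, $R[G]$ its real group algebra, and $S=\{x\in R[G]: \sum_g x_g=1,\ x_g\ge0 \ \forall g\}$. For $x\in S$ let $n_x,G_x,c_x,m_x$ be as defined in the context, and let $S(x)$ be the set of all limits of all convergent subsequences of $(x^m)_{m\in\mathbb N}$. Then for every $x\in S$: $$xc_x=c_xx,\qquad S(x)=\{c_xx^r:\ 0\le r<m_x\}.$$ In particular $|S(x)|=1$, i.e. $S(x)=\{c_x\}$, if and only if $x\in R[G_x]$.
   Context: Elements of $R[G]$ are written $x=\sum_{g\in G}x_gg$; $\mathrm{Supp}(x)=\{g\in G: x_g\neq0\}$; $\mathbb N=\{1,2,\dots\}$; $R[G]$ carries the Euclidean topology. For $x\in S$: $n_x=\min\{k\in\mathbb N: (x^k)_e\ne0\}$; $G_x$ is the subgroup of $G$ generated by $\mathrm{Supp}(x^{n_x})$; $c_x=\frac1{|G_x|}\sum_{g\in G_x}g$; $m_x=\min\{k\in\mathbb N:\ \mathrm{Supp}(x^k)\subset G_x\}$. $R[G_x]$ denotes the subspace of $R[G]$ spanned by $G_x$. *)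

From HB Require Import structures.
From mathcomp Require Import all_boot all_order all_algebra all_fingroup.
From mathcomp Require Import all_classical all_reals all_analysis.
Set Implicit Arguments. Unset Strict Implicit. Unset Printing Implicit Defensive.
Import Order.TTheory GRing.Theory Num.Theory.
Import numFieldNormedType.Exports.
Local Open Scope ring_scope.
Local Open Scope classical_set_scope.

Section GroupAlgebra.
Variables (R : realType) (gT : finGroupType).

(* The real group algebra R[G] of the finite group G = gT:
   x = sum_g x_g g is represented by the coefficient function g |-> x_g. *)
Definition galg := {ffun gT -> R}.

Definition gmul (x y : galg) : galg :=
  [ffun g => \sum_(h : gT) x h * y (h^-1 * g)%g].

Definition gone : galg := [ffun g => (g == 1%g)%:R].

Fixpoint gpow (x : galg) (n : nat) : galg :=
  match n with 0 => gone | n'.+1 => gmul x (gpow x n') end.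

Definition Supp (x : galg) : {set gT} := [set g | x g != 0].

Definition simplex : set galg :=
  [set x | \sum_(g : gT) x g = 1 /\ forall g, 0 <= x g].

Definition n_x (x : galg) : nat :=
  match pselect (exists k, [pred k | (0 < k)%N && (gpow x k 1%g != 0)] k) with
  | left h => ex_minn h
  | right _ => 0%N
  end.

Definition G_x (x : galg) : {group gT} := <<Supp (gpow x (n_x x))>>%G.

Definition c_x (x : galg) : galg :=
  [ffun g => if g \in G_x x then (#|G_x x|%:R)^-1 else 0].

Definition m_x (x : galg) : nat :=
  match pselect (exists k, [pred k | (0 < k)%N && (Supp (gpow x k) \subset G_x x)] k) with
  | left h => ex_minn h
  | right _ => 0%N
  end.

Definition in_RGx (x : galg) : Prop := Supp x \subset G_x x.

(* S(x): limits of convergent subsequences (x^{phi k})_k of (x^m)_{m in N},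
   with phi strictly increasing, phi 0 >= 1.  Convergence in the Euclidean
   topology of R[G] = R^|G| is coordinatewise convergence. *)
Definition Slim (x : galg) : set galg :=
  [set y : galg | exists phi : nat -> nat,
     (0 < phi 0%N)%N /\ (forall k, (phi k < phi k.+1)%N) /\
     forall g : gT, (fun k => gpow x (phi k) g) @ \oo --> y g].

End GroupAlgebra.

(* The supports Supp (x^(n_x k)) = Supp (x^n_x)^k increase with k (they contain 1)
   and are eventually equal to G_x. For such L = n_x k, Supp x normalizes G_x,
   so x commutes with the uniform law c_x on G_x, and z = x^L has support
   exactly G_x, so z^q -> c_x geometrically (Doeblin). Hence x^(qL + r) = z^q x^r
   is close to c_x x^r = c_x x^(qL + r); as c_x x^(m_x) = c_x, the sequence
   c_x x^j only depends on j mod m_x, and its values c_x x^r (r < m_x) are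
   exactly the limit points of (x^j). *)

From HB Require Import structures.
From mathcomp Require Import all_boot all_order all_algebra all_fingroup.
From mathcomp Require Import all_classical all_reals all_analysis.
From mathcomp Require Import zify lra.
Import Order.TTheory GRing.Theory Num.Theory.
Import numFieldNormedType.Exports.
Local Open Scope ring_scope.
Set Implicit Arguments. Unset Strict Implicit. Unset Printing Implicit Defensive.

Lemma infinitely_often_value (T : finType) (u : nat -> T) :
  exists t, forall K, exists2 k, (K <= k)%N & u k = t.
Proof.
apply: contrapT => none.
have bounded t : exists K, forall k, (K <= k)%N -> u k <> t.
  apply: contrapT => unbounded; apply: none; exists t => K.
  apply: contrapT => farther; apply: unbounded; exists K => k Kk ukt.
  by apply: farther; exists k.
have [K HK] := boolp.choice bounded.
pose N := \max_t K t.
exact: HK (u N) N (@leq_bigmax _ K (u N)) erefl.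
Qed.

Lemma increasing_nat_ge (phi : nat -> nat) :
  (forall k, phi k < phi k.+1)%N -> forall k, (k <= phi k)%N.
Proof. by move=> phiS; elim=> // k IH; exact: leq_ltn_trans IH (phiS k). Qed.

Section SetPowers.
Variable gT : finGroupType.
Implicit Types (A : {set gT}) (H : {group gT}).
Local Open Scope group_scope.

Lemma expgs_gen_stable A k j :
  1 \in A -> <<A>> = A ^+ k -> A ^+ (j + k) = <<A>>.
Proof.
move=> A1 genA; elim: j => [|j IH] //.
rewrite addSn expgS IH; apply/eqP; rewrite finset.eqEsubset mulg_subr // andbT.
by rewrite -{2}(mulGid <<A>>) mulSg // subset_gen.
Qed.

(* Writing u a = b v with b in A and v in H, u ^ a = (a^-1 b) v, and
   a^-1 b = (t a)^-1 (t b) lies in H. *)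
Lemma lcoset_sub_norm H A t :
  A * H = H * A -> t *: A \subset H -> A \subset 'N(H).
Proof.
move=> AH_HA tAH; have tA a : a \in A -> t * a \in H.
  by move=> aA; apply: (fintype.subsetP tAH); apply/lcosetP; exists a.
apply/fintype.subsetP => a aA; rewrite inE.
apply/fintype.subsetP => _ /imsetP[u uH ->].
have : u * a \in A * H by rewrite AH_HA mem_mulg.
case/mulsgP => b v bA vH uab.
have abH : a^-1 * b \in H.
  by have := groupM (groupVr (tA a aA)) (tA b bA); rewrite invMg -mulgA mulKg.
by rewrite conjgE uab mulgA groupM.
Qed.

End SetPowers.

Section GroupAlgebra.
Variables (R : realType) (gT : finGroupType).
Implicit Types (H : {group gT}) (d f w y z : galg R gT).

Lemma gmulE y z g : gmul y z g = \sum_h y h * z (h^-1 * g)%g.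
Proof. by rewrite ffunE. Qed.

Lemma galgBE y z g : (y - z) g = y g - z g.
Proof. by rewrite !ffunE. Qed.

Lemma galgZE (a : R) y g : (a *: y) g = a * y g.
Proof. by rewrite !ffunE. Qed.

Lemma gmulEr y z g : gmul y z g = \sum_h y (g * h^-1)%g * z h.
Proof.
have inj : injective (fun h : gT => (g * h^-1)%g) by move=> u v /mulgI/invg_inj.
rewrite gmulE (reindex_inj inj); apply: eq_bigr => h _.
by rewrite invMg invgK -mulgA mulVg mulg1.
Qed.

Lemma gmulA y z w : gmul (gmul y z) w = gmul y (gmul z w).
Proof.
apply/ffunP => g; rewrite !ffunE.
under eq_bigr => h _ do rewrite ffunE big_distrl.
rewrite exchange_big; apply: eq_bigr => k _.
rewrite ffunE big_distrr (reindex_inj (mulgI k)) /=.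
by apply: eq_bigr => h _; rewrite mulKg invMg -mulgA mulrA.
Qed.

Lemma gmul1l y : gmul (gone R gT) y = y.
Proof.
apply/ffunP => g; rewrite gmulE (bigD1 1%g) //= big1 => [|h /negbTE hn].
  by rewrite ffunE eqxx invg1 mul1g mul1r addr0.
by rewrite ffunE hn mul0r.
Qed.

Lemma gmul1r y : gmul y (gone R gT) = y.
Proof.
apply/ffunP => g; rewrite gmulEr (bigD1 1%g) //= big1 => [|h /negbTE hn].
  by rewrite ffunE eqxx invg1 mulg1 mulr1 addr0.
by rewrite ffunE hn mulr0.
Qed.

Lemma gmulDl y z w : gmul (y + z) w = gmul y w + gmul z w.
Proof.
by apply/ffunP => g; rewrite !ffunE -big_split; apply: eq_bigr => h _; rewrite ffunE mulrDl.
Qed.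

Lemma gmulZl (a : R) y z : gmul (a *: y) z = a *: gmul y z.
Proof.
by apply/ffunP => g; rewrite !ffunE scaler_sumr; apply: eq_bigr => h _; rewrite ffunE -mulrA.
Qed.

Lemma gmulBl y z w : gmul (y - z) w = gmul y w - gmul z w.
Proof.
by apply/ffunP => g; rewrite !ffunE -sumrB; apply: eq_bigr => h _; rewrite !ffunE mulrBl.
Qed.

Lemma gmulBr y z w : gmul y (z - w) = gmul y z - gmul y w.
Proof.
by apply/ffunP => g; rewrite !ffunE -sumrB; apply: eq_bigr => h _; rewrite !ffunE mulrBr.
Qed.

Lemma gpowD y i j : gpow y (i + j) = gmul (gpow y i) (gpow y j).
Proof. by elim: i => [|i IH]; rewrite ?gmul1l // addSn /= IH gmulA. Qed.

Lemma gpow1 y : gpow y 1 = y.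
Proof. exact: gmul1r. Qed.

Lemma gpowM y i j : gpow y (i * j) = gpow (gpow y i) j.
Proof. by elim: j => [|j IH]; rewrite ?muln0 // mulnS gpowD IH. Qed.

Lemma norm_gmul_le_l d f b g : (forall h, 0 <= d h) -> (forall h, `|f h| <= b) ->
  `|gmul d f g| <= (\sum_h d h) * b.
Proof.
move=> d0 fb; rewrite gmulE mulr_suml; apply: le_trans (ler_norm_sum _ _ _) _.
by apply: ler_sum => h _; rewrite normrM ger0_norm // ler_wpM2l.
Qed.

Lemma norm_gmul_le_r f w b g : (forall h, `|f h| <= b) -> (forall h, 0 <= w h) ->
  `|gmul f w g| <= b * \sum_h w h.
Proof.
move=> fb w0; rewrite gmulEr mulr_sumr; apply: le_trans (ler_norm_sum _ _ _) _.
by apply: ler_sum => h _; rewrite normrM [`|w h|]ger0_norm // ler_wpM2r.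
Qed.

Lemma sum_gmul y z : \sum_g gmul y z g = (\sum_g y g) * \sum_g z g.
Proof.
under eq_bigr => g _ do rewrite gmulE.
rewrite exchange_big mulr_suml; apply: eq_bigr => h _ /=.
by rewrite -mulr_sumr (reindex_inj (mulgI h)); under eq_bigr do rewrite mulKg.
Qed.

Lemma simplex_gone : simplex (gone R gT).
Proof.
split=> [|g]; last by rewrite ffunE ler0n.
rewrite (bigD1 1%g) //= big1 => [|h /negbTE hn]; first by rewrite ffunE eqxx addr0.
by rewrite ffunE hn.
Qed.

Lemma simplex_gmul y z : simplex y -> simplex z -> simplex (gmul y z).
Proof.
move=> [sy y0] [sz z0]; split=> [|g]; first by rewrite sum_gmul sy sz mulr1.
by rewrite gmulE; apply: sumr_ge0 => h _; exact: mulr_ge0.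
Qed.

Lemma simplex_gpow y k : simplex y -> simplex (gpow y k).
Proof.
by move=> sy; elim: k => [|k IH]; [exact: simplex_gone | exact: simplex_gmul].
Qed.

Lemma dist_simplex_le1 y z g : simplex y -> simplex z -> `|y g - z g| <= 1.
Proof.
have le1 w : simplex w -> w g <= 1.
  by move=> [sw w0]; rewrite -sw (bigD1 g) //= lerDl sumr_ge0.
move=> sy sz; have := le1 _ sy; have := le1 _ sz; have := sy.2 g; have := sz.2 g.
by rewrite ler_norml => *; apply/andP; split; lra.
Qed.

Lemma Supp_simplex y : simplex y -> exists g, g \in Supp y.
Proof.
move=> [sy _]; have [g yg | y0] := pickP (fun g => y g != 0).
  by exists g; rewrite inE.
move: sy; rewrite big1 => [/esym/eqP|g _]; first by rewrite oner_eq0.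
exact/eqP/negbFE/y0.
Qed.

Lemma Supp_gmul y z : (forall g, 0 <= y g) -> (forall g, 0 <= z g) ->
  Supp (gmul y z) = (Supp y * Supp z)%g.
Proof.
move=> y0 z0; apply/setP => g; rewrite inE gmulE; apply/idP/idP.
  apply: contraNT => notyz; rewrite big1 // => h _.
  apply/eqP; apply: contraNT notyz; rewrite mulf_eq0 negb_or => /andP[yh zh].
  by apply/mulsgP; exists h (h^-1 * g)%g; rewrite ?inE ?mulKVg.
case/mulsgP => h k; rewrite !inE => yh zk ->.
rewrite (bigD1 h) //= mulKg; apply/lt0r_neq0/ltr_pwDl.
  by rewrite mulr_gt0 // lt_def ?yh ?zk ?y0 ?z0.
by apply: sumr_ge0 => i _; exact: mulr_ge0.
Qed.

Lemma Supp_gpow y k : simplex y -> Supp (gpow y k) = (Supp y ^+ k)%g.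
Proof.
move=> sy; elim: k => [|k IH].
  by apply/setP => g; rewrite expg0 !inE ffunE pnatr_eq0 eqb0 negbK.
by rewrite expgS -IH /= Supp_gmul // => g; [exact: sy.2 | exact: (simplex_gpow k sy).2].
Qed.

Lemma Supp_gpowD y i j : simplex y ->
  Supp (gpow y (i + j)) = (Supp (gpow y i) * Supp (gpow y j))%g.
Proof. by move=> sy; rewrite !Supp_gpow // expgD. Qed.

Lemma Supp_gpow_subG H y k : simplex y -> Supp y \subset H -> Supp (gpow y k) \subset H.
Proof.
move=> sy yH; elim: k => [|k IH]; first by rewrite Supp_gpow // expg0 sub1G.
by rewrite -add1n Supp_gpowD // gpow1 -(mulGid H) mulgSS.
Qed.

(* [c_x x] is [unif (G_x x)] by definition. *)
Definition unif H : galg R gT := [ffun g => if g \in H then #|H|%:R^-1 else 0].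

Lemma unifE H g : unif H g = if g \in H then #|H|%:R^-1 else 0.
Proof. by rewrite ffunE. Qed.

Lemma simplex_unif H : simplex (unif H).
Proof.
split=> [|g]; last by rewrite unifE; case: ifP; rewrite // invr_ge0 ler0n.
under eq_bigr => g _ do rewrite unifE.
rewrite -big_mkcond sumr_const -(mulr_natl (#|H|%:R^-1 : R)) mulfV //.
by rewrite pnatr_eq0 -lt0n cardG_gt0.
Qed.

Lemma Supp_unif H : Supp (unif H) = H.
Proof.
apply/setP => g; rewrite inE unifE; case: ifP; rewrite ?eqxx //.
by rewrite invr_eq0 pnatr_eq0 -lt0n cardG_gt0.
Qed.

Lemma unif_gmul H w : simplex w -> Supp w \subset H -> gmul (unif H) w = unif H.
Proof.
move=> [sw w0] wH; apply/ffunP => g; rewrite gmulEr.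
transitivity (\sum_h unif H g * w h); last by rewrite -mulr_sumr sw mulr1.
apply: eq_bigr => h _; have [-> | wh] := eqVneq (w h) 0; first by rewrite !mulr0.
have hH : h \in H by apply: (fintype.subsetP wH); rewrite inE.
by rewrite !unifE groupMr ?groupV.
Qed.

Lemma gmul_unif H w : simplex w -> Supp w \subset H -> gmul w (unif H) = unif H.
Proof.
move=> [sw w0] wH; apply/ffunP => g; rewrite gmulE.
transitivity (\sum_h w h * unif H g); last by rewrite -mulr_suml sw mul1r.
apply: eq_bigr => h _; have [-> | wh] := eqVneq (w h) 0; first by rewrite !mul0r.
have hH : h \in H by apply: (fintype.subsetP wH); rewrite inE.
by rewrite !unifE groupMl ?groupV.
Qed.

Lemma gmul_unifC H w : Supp w \subset 'N(H)%g -> gmul w (unif H) = gmul (unif H) w.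
Proof.
move=> wN; apply/ffunP => g; rewrite gmulE gmulEr; apply: eq_bigr => h _.
have [-> | wh] := eqVneq (w h) 0; first by rewrite mul0r mulr0.
have hN : (h^-1)%g \in 'N(H)%g by rewrite groupV (fintype.subsetP wN) // inE.
by rewrite mulrC !unifE -(memJ_norm (h^-1 * g)%g hN) conjgE invgK mulgA mulKVg.
Qed.

(* Doeblin: z dominates eps times the uniform law on H, so z = d + eps unif H
   with d >= 0 of mass q = 1 - eps, and z^(k+1) - unif H = d (z^k - unif H). *)
Lemma gpow_unif_decay H z : simplex z -> Supp z = H ->
  exists q, [/\ 0 <= q, q < 1 & forall k g, `|gpow z k g - unif H g| <= q ^+ k].
Proof.
move=> sz SzH; set u := unif H.
pose mu := \big[Order.min/1]_(h in H) z h.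
have mu_pos : 0 < mu.
  apply: lt_bigmin => // h hH; rewrite lt_def (sz.2 h) andbT.
  by rewrite -SzH inE in hH.
pose eps := #|H|%:R * mu; pose d := z - eps *: u.
have d0 h : 0 <= d h.
  rewrite /d galgBE galgZE subr_ge0 unifE.
  case: ifP => hH; last by rewrite mulr0 (sz.2 h).
  rewrite mulrAC mulfV ?mul1r ?bigmin_le_cond //.
  by rewrite pnatr_eq0 -lt0n cardG_gt0.
have sd : \sum_h d h = 1 - eps.
  rewrite /d; under eq_bigr => h _ do rewrite galgBE galgZE.
  by rewrite sumrB -mulr_sumr (simplex_unif H).1 sz.1 mulr1.
have uf k : gmul u (gpow z k - u) = 0.
  rewrite gmulBr !unif_gmul ?subrr ?Supp_unif //.
  exact: simplex_unif.
  exact: simplex_gpow.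
  by rewrite Supp_gpow_subG // SzH.
have step k : gpow z k.+1 - u = gmul d (gpow z k - u).
  have zu : gmul z u = u by rewrite gmul_unif // SzH.
  have zd : z = d + eps *: u by rewrite subrK.
  transitivity (gmul z (gpow z k - u)); first by rewrite gmulBr zu.
  by rewrite {1}zd gmulDl gmulZl uf scaler0 addr0.
exists (1 - eps); split.
- by rewrite -sd sumr_ge0.
- by rewrite ltrBlDr ltrDl mulr_gt0 // ltr0n cardG_gt0.
suff decay k g : `|(gpow z k - u) g| <= (1 - eps) ^+ k.
  by move=> k g; rewrite -galgBE.
elim: k g => [|k IH] g.
  rewrite expr0; apply: le_trans (dist_simplex_le1 g simplex_gone (simplex_unif H)).
  by rewrite galgBE.
by rewrite step exprS -{1}sd norm_gmul_le_l.
Qed.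

End GroupAlgebra.

Arguments unif {R gT} H.
Arguments simplex_unif {R gT} H.

Section Powers.
Variables (R : realType) (gT : finGroupType) (x : galg R gT).
Hypothesis x_simplex : simplex x.
Local Notation n := (n_x x).
Local Notation m := (m_x x).
Local Notation H := (G_x x).
Local Notation c := (c_x x).
Local Open Scope classical_set_scope.

Lemma n_x_spec : (0 < n)%N /\ 1%g \in Supp (gpow x n).
Proof.
rewrite /n_x; case: pselect => [ex|not_ex].
  by case: (ex_minnP ex) => k /andP[k0 k1] _; rewrite inE.
exfalso; apply: not_ex; have [a aS] := Supp_simplex x_simplex.
have pow_a j : (a ^+ j)%g \in (Supp x ^+ j)%g.
  by elim: j => [|j IH]; rewrite ?expg0 ?set11 // !expgS mem_mulg.
have := pow_a #[a]%g; rewrite expg_order -Supp_gpow // inE => x_a_1.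
by exists #[a]%g; rewrite /= order_gt0.
Qed.

Lemma m_x_spec : [/\ (0 < m)%N, Supp (gpow x m) \subset H &
  forall k, (0 < k)%N -> Supp (gpow x k) \subset H -> (m <= k)%N].
Proof.
rewrite /m_x; case: pselect => [ex|not_ex].
  case: (ex_minnP ex) => k /andP[k0 kH] kmin; split=> // j j0 jH.
  by apply: kmin; rewrite /= j0 jH.
by exfalso; apply: not_ex; exists n; rewrite /= n_x_spec.1 subset_gen.
Qed.

Lemma Supp_gpow_n_stable : exists k, forall j, (k <= j)%N -> Supp (gpow x (n * j)) = H.
Proof.
set A := Supp (gpow x n); have A1 : 1%g \in A := n_x_spec.2.
have [k genA] := gen_expgs A.
have {}genA : <<A>>%g = (A ^+ k)%g.
  by rewrite genA; congr (_ ^+ _)%g; apply/finset.setUidPr; rewrite finset.sub1set.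
exists k => j kj; rewrite gpowM Supp_gpow; last exact: simplex_gpow.
by rewrite -(subnK kj) expgs_gen_stable.
Qed.

Lemma Supp_sub_norm : Supp x \subset 'N(H)%g.
Proof.
have [k stable] := Supp_gpow_n_stable.
set J := (n * k.+1)%N; have SJ : Supp (gpow x J) = H := stable _ (leqnSn k).
have Sx : Supp x = Supp (gpow x 1) by rewrite gpow1.
have [t tS] := Supp_simplex (simplex_gpow n.-1 x_simplex).
apply: (@lcoset_sub_norm _ _ _ t).
  by rewrite -SJ Sx -!Supp_gpowD // addnC.
apply/fintype.subsetP => _ /lcosetP[a aS ->].
have nJ : (n * k.+2 = n.-1 + 1 + J)%N by rewrite addn1 prednK ?n_x_spec.1 // mulnS.
rewrite -(stable k.+2 (leqW (leqnSn k))) nJ !Supp_gpowD // gpow1 SJ.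
by rewrite -[(t * a)%g]mulg1 !mem_mulg.
Qed.

Lemma c_x_gmulC : gmul x c = gmul c x.
Proof. exact: gmul_unifC Supp_sub_norm. Qed.

Lemma c_gpow_mod j : gmul c (gpow x j) = gmul c (gpow x (j %% m)).
Proof.
have [_ mH _] := m_x_spec.
have c_gpow_m i : gmul c (gpow x (m * i)) = c.
  have sxm := simplex_gpow m x_simplex.
  by rewrite gpowM unif_gmul //; [exact: simplex_gpow | exact: Supp_gpow_subG].
by rewrite {1}(divn_eq j m) gpowD -gmulA mulnC c_gpow_m.
Qed.

(* With L = n_x k as in Supp_gpow_n_stable and j = qL + r, x^j - c_x x^j
   = (z^q - c_x) x^r for z = x^L. *)
Lemma gpow_sub_c_gpow_small e : 0 < e ->
  exists K, forall j g, (K <= j)%N -> `|gpow x j g - gmul c (gpow x j) g| < e.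
Proof.
move=> e0; have [k stable] := Supp_gpow_n_stable.
set L := (n * k.+1)%N; have SL : Supp (gpow x L) = H := stable _ (leqnSn k).
have L0 : (0 < L)%N by rewrite muln_gt0 n_x_spec.1.
have sz := simplex_gpow L x_simplex.
have [q [q0 q1 decay]] := gpow_unif_decay sz SL.
have [K qK] : exists K, forall i, (K <= i)%N -> q ^+ i < e.
  have : `|q| < 1 by rewrite ger0_norm.
  move/cvg_expr/cvgrPdist_lt/(_ e e0) => [K _ HK]; exists K => i Ki.
  by have := HK i Ki; rewrite sub0r normrN ger0_norm // exprn_ge0.
exists (K * L)%N => j g KLj.
rewrite (divn_eq j L) mulnC gpowD gpowM -gmulA.
rewrite unif_gmul; [| exact: simplex_gpow | by apply: Supp_gpow_subG; rewrite ?SL].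
rewrite -galgBE -gmulBl.
have sxr := simplex_gpow (j %% L) x_simplex.
apply: le_lt_trans (norm_gmul_le_r (b := q ^+ (j %/ L)%N) _ _ sxr.2) _ => [h|].
  by rewrite galgBE decay.
by rewrite sxr.1 mulr1 qK // leq_divRL.
Qed.

Lemma Slim_eq : Slim x = [set y | exists r, (r < m)%N /\ y = gmul c (gpow x r)].
Proof.
have [m0 _ _] := m_x_spec.
apply/seteqP; split => y /=.
  move=> [phi [_ [phiS conv]]].
  have [j jinf] := infinitely_often_value (fun k => Ordinal (ltn_pmod (phi k) m0)).
  exists j; split; first exact: ltn_ord.
  apply/ffunP => g; apply/eqP; rewrite -subr_eq0 -normr_le0.
  apply/ler_addgt0Pr => e e0; rewrite add0r.
  have e2 : 0 < e / 2 by rewrite divr_gt0.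
  move/cvgrPdist_lt : (conv g) => /(_ _ e2)[K1 _ near_y].
  have [K2 small] := gpow_sub_c_gpow_small e2.
  have [k Kk /(congr1 val) /= phik] := jinf (K1 + K2)%N.
  have Kphik : (K1 + K2 <= phi k)%N := leq_trans Kk (increasing_nat_ge phiS k).
  rewrite [leRHS]splitr; apply: le_trans (ler_distD (gpow x (phi k) g) _ _) _.
  rewrite -phik -c_gpow_mod lerD ?ltW ?near_y ?small //.
    exact: leq_trans (leq_addr _ _) Kk.
  exact: leq_trans (leq_addl _ _) Kphik.
move=> [r [rm ->]].
exists (fun k => m * k.+1 + r)%N; split; first by rewrite muln1 ltn_addr.
split; first by move=> k; rewrite ltn_add2r ltn_pmul2l.
move=> g; apply/cvgrPdist_lt => e e0.
have [K small] := gpow_sub_c_gpow_small e0.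
exists K => // k /= Kk.
have -> : gmul c (gpow x r) = gmul c (gpow x (m * k.+1 + r)).
  by rewrite [RHS]c_gpow_mod mulnC modnMDl modn_small.
by rewrite distrC small //; apply: leq_trans Kk _; nia.
Qed.

Lemma m_x_eq1 : m = 1%N <-> in_RGx x.
Proof.
have [m0 mH mmin] := m_x_spec.
split=> [m1 | xH]; first by move: mH; rewrite m1 gpow1.
by apply/eqP; rewrite eqn_leq m0 andbT mmin // gpow1.
Qed.

Lemma Slim_RGx : in_RGx x -> Slim x = [set c].
Proof.
move=> /m_x_eq1 m1; rewrite Slim_eq m1; apply/seteqP; split => y /=.
  by move=> [r [r1 ->]]; move: r1; rewrite ltnS leqn0 => /eqP ->; rewrite gmul1r.
by move=> ->; exists 0%N; rewrite gmul1r.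
Qed.

Lemma Slim_not_RGx : ~ in_RGx x -> ~ exists y, Slim x = [set y].
Proof.
move=> notRGx [y Sy]; have [m0 _ _] := m_x_spec.
have m2 : (1 < m)%N.
  by rewrite ltn_neqAle eq_sym m0 andbT; apply/eqP => /m_x_eq1.
have : Slim x c /\ Slim x (gmul c x).
  by rewrite Slim_eq; split; [exists 0%N; rewrite gmul1r | exists 1%N; rewrite gpow1].
rewrite Sy => -[/= c_y cx_y]; apply: notRGx.
have SH : Supp (gmul c x) = (H * Supp x)%g.
  by rewrite Supp_gmul; [rewrite Supp_unif | exact: (simplex_unif H).2 | exact: x_simplex.2].
by have := mulg_subr (Supp x) (group1 H); rewrite -SH cx_y -c_y Supp_unif.
Qed.

End Powers.

Local Open Scope classical_set_scope.

Theorem theorem1 (R : realType) (gT : finGroupType) (x : galg R gT) :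
  simplex x ->
  gmul x (c_x x) = gmul (c_x x) x /\
  Slim x = [set y : galg R gT | exists r : nat, (r < m_x x)%N /\ y = gmul (c_x x) (gpow x r)] /\
  ((exists y, Slim x = [set y]) <-> in_RGx x) /\
  (Slim x = [set c_x x] <-> in_RGx x).
Proof.
move=> x_simplex.
have single_RGx : (exists y, Slim x = [set y]) <-> in_RGx x.
  split=> [single | /(Slim_RGx x_simplex) ->]; last by exists (c_x x).
  by apply: contrapT => notRGx; exact: Slim_not_RGx x_simplex notRGx single.
split; first exact: c_x_gmulC.
split; first exact: Slim_eq.
split=> //; split=> [Sc | ]; last exact: Slim_RGx.
by apply/single_RGx; exists (c_x x).
Qed.
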